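(* Let $\gamma$ be the Tribonacci constant and let $x,y\in\mathbb Z_{-\gamma}$. Then $\mathrm{fr}(x+y)\le 6$ and $\mathrm{fr}(x-y)\le 6$; in particular $\mathrm{fr}(-x)\le 6$. In words: the sum and the difference of two $(-\gamma)$-integers have finite $(-\gamma)$-expansions with at most $6$ digits after the radix point.
   Context: Let $\gamma\approx 1.839$ be the unique real root of $x^3-x^2-x-1$ (the Tribonacci constant). Fix a real number $\beta>1$ and set $\ell=\frac{-\beta}{\beta+1}$. Define $T_{-\beta}:[\ell,\ell+1)\to[\ell,\ell+1)$ by $T_{-\beta}(x)=-\beta x-\lfloor -\beta x-\ell\rfloor$. For $x\in[\ell,\ell+1)$, the $(-\beta)$-expansion of $x$ is the digit sequence $d_{-\beta}(x)=x_1x_2x_3\cdots$ with $x_i=\lfloor -\beta\, T_{-\beta}^{i-1}(x)-\ell\rfloor\in\{0,1,\dots,\lfloor\beta\rfloor\}$. It satisfies $x=\sum_{i\ge1}x_i(-\beta)^{-i}$. For arbitrary $x\in\mathbb R$, let $k\ge 0$ be the minimal integer with $x/(-\beta)^k\in(\ell,\ell+1)$ and let $d_{-\beta}(x/(-\beta)^k)=x_1x_2\cdots$. The $(-\beta)$-expansion of $x$ is $x_1\cdots x_k\bullet x_{k+1}x_{k+2}\cdots$ if $k\ge1$, and $0\bullet x_1x_2\cdots$ if $k=0$. The digits written after the symbol $\bullet$ are the fractional digits. The set of $(-\beta)$-integers $\mathbb Z_{-\beta}$ is the set of $x\in\mathbb R$ whose $(-\beta)$-expansion has only zeros after $\bullet$.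 Equivalently, $\mathbb Z_{-\beta}=\bigcup_{i\ge0}(-\beta)^iT_{-\beta}^{-i}(0)$. The set of numbers with finite expansion is $\mathrm{Fin}(-\beta)=\bigcup_{i\ge0}(-\beta)^{-i}\mathbb Z_{-\beta}$. For $x\in\mathrm{Fin}(-\beta)$ with expansion $x_k\cdots x_0\bullet x_{-1}\cdots x_{-n}0^\omega$ and $x_{-n}\ne0$, set $\mathrm{fr}(x)=n$. Set $\mathrm{fr}(x)=0$ if all fractional digits are zero, and $\mathrm{fr}(x)=+\infty$ if $x\notin\mathrm{Fin}(-\beta)$. *)

From Stdlib Require Import Reals Lra Lia ZArith.
Open Scope R_scope.

(* floor : Int_part r = up r - 1 is the floor of r (base_Int_part). *)

Definition ell (b : R) : R := - b / (b + 1).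

Definition Tneg (b x : R) : R := - b * x - IZR (Int_part (- b * x - ell b)).

(* digit x_i of d_{-beta}(x) for i = m+1 :
   x_{m+1} = floor(-beta T^m(x) - l) *)
Definition digit (b x : R) (m : nat) : Z :=
  Int_part (- b * (Nat.iter m (Tneg b) x) - ell b).

Definition in_open (b y : R) : Prop := ell b < y < ell b + 1.
Definition min_index (b x : R) (k : nat) : Prop :=
  in_open b (x / (- b) ^ k) /\ (forall j : nat, (j < k)%nat -> ~ in_open b (x / (- b) ^ j)).

(* The fractional digits of x are x_{k+1}, x_{k+2}, ... of d_{-beta}(x/(-beta)^k);
   the j-th fractional digit (j >= 1) is x_{k+j} = digit b (x/(-beta)^k) (k+j-1).
   frac_zero_after b x n : all fractional digits at positions j > n vanish. *)
Definition frac_zero_after (b x : R) (n : nat) : Prop :=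
  exists k : nat, min_index b x k /\
    forall j : nat, (n < j)%nat -> digit b (x / (- b) ^ k) (k + j - 1) = 0%Z.

Definition in_Zneg (b x : R) : Prop := frac_zero_after b x 0.

Definition in_Fin (b x : R) : Prop := exists i : nat, in_Zneg b (x * (- b) ^ i).

(* fr(x) <= n : x in Fin(-beta) (otherwise fr(x) = +infinity) and the last
   nonzero fractional digit (if any) is at position <= n. *)
Definition fr_le (b x : R) (n : nat) : Prop := in_Fin b x /\ frac_zero_after b x n.

From Stdlib Require Import Reals Lra Lia ZArith List Classical Bool.
Import ListNotations.
Open Scope R_scope.

(* Normalise [x], [y] and [z = x ± y] by a common power [(-γ)^K] so that all three lie in
   [(ℓ, ℓ + 1)] and the [T]-orbits of the first two reach [0] after [K] steps. Since [γ < 2],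
   each step of [T] is [w ↦ -γ w - d] with a digit [d ∈ {0, 1}], so
   [D_j = T^j z - T^j x ∓ T^j y] obeys [D_(j+1) = -γ D_j + e] with [e ∈ {-2, ..., 2}]; it lies
   in [Z[γ]] and in a bounded window, hence runs through a finite set of 30 states, which is
   checked by computation with exact arithmetic in [Z[γ]] and a rational enclosure of [γ].
   At step [K] we have [D_K = T^K z ∈ [ℓ, ℓ + 1)], and for every such state six further
   steps of [T] reach [0]. *)

Lemma Int_part_unique r (n : Z) : IZR n <= r < IZR n + 1 -> Int_part r = n.
Proof.
  intros [H1 H2]. destruct (base_Int_part r) as [H3 H4].
  assert (A1 : IZR (Int_part r) < IZR (n + 1)) by (rewrite plus_IZR; lra).
  assert (A2 : IZR n < IZR (Int_part r + 1)) by (rewrite plus_IZR; lra).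
  apply lt_IZR in A1, A2. lia.
Qed.

Lemma exists_least_nat (P : nat -> Prop) n :
  P n -> exists k, P k /\ forall j, (j < k)%nat -> ~ P j.
Proof.
  intros Pn.
  destruct (dec_inh_nat_subset_has_unique_least_element P (fun m => classic (P m)))
    as [k [[Pk Hk] _]]; [now exists n|].
  exists k. split; [exact Pk|]. intros j Hj Pj. specialize (Hk j Pj). lia.
Qed.

Lemma Tneg_range b u : ell b <= Tneg b u < ell b + 1.
Proof. unfold Tneg. destruct (base_Int_part (- b * u - ell b)). lra. Qed.

Lemma Tneg_eq b u (d : Z) : IZR d <= - b * u - ell b < IZR d + 1 ->
  Tneg b u = - b * u - IZR d.
Proof. intros H. unfold Tneg. now rewrite (Int_part_unique _ d H). Qed.

Lemma iter_Tneg_range b w m : in_open b w -> ell b <= Nat.iter m (Tneg b) w < ell b + 1.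
Proof. intros Hw. destruct m; [cbn; unfold in_open in Hw; lra | apply Tneg_range]. Qed.

Section NegativeBetaTransformation.

Variable b : R.
Hypothesis b_gt1 : 1 < b.

Lemma ell_mul : ell b * (b + 1) = - b.
Proof. unfold ell; field; lra. Qed.

Lemma ell_bounds : -1 < ell b < - (1 / 2).
Proof. pose proof ell_mul. unfold ell in *. split; nra. Qed.

Lemma pow_opp_neq0 n : (- b) ^ n <> 0.
Proof. apply pow_nonzero; lra. Qed.

Lemma Rabs_inv_opp_lt1 : Rabs (/ - b) < 1.
Proof.
  rewrite Rabs_inv by lra. rewrite Rabs_left by lra.
  rewrite <- Rinv_1. apply Rinv_lt_contravar; lra.
Qed.

Lemma Tneg_0 : Tneg b 0 = 0.
Proof. pose proof ell_bounds. rewrite (Tneg_eq b 0 0); cbn; lra. Qed.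

Lemma iter_Tneg_0 n : Nat.iter n (Tneg b) 0 = 0.
Proof. induction n as [|n IH]; [reflexivity|]. rewrite Nat.iter_succ, IH. exact Tneg_0. Qed.

Lemma Tneg_digit01 u : b < 2 -> ell b <= u < ell b + 1 ->
  exists d : Z, (d = 0 \/ d = 1)%Z /\ Tneg b u = - b * u - IZR d.
Proof.
  intros b_lt2 Hu. pose proof ell_mul.
  set (r := - b * u - ell b).
  assert (r_pos : 0 < r) by (unfold r; nra).
  assert (r_le : r <= b) by (unfold r; nra).
  exists (Int_part r). destruct (base_Int_part r) as [H3 H4]. split; [|reflexivity].
  assert (A1 : IZR (Int_part r) < IZR 2) by lra.
  assert (A2 : IZR (-1) < IZR (Int_part r)) by lra.
  apply lt_IZR in A1, A2. lia.
Qed.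

Lemma in_open_div w : in_open b w -> in_open b (w / - b).
Proof.
  intros [H1 H2]. pose proof ell_mul. pose proof ell_bounds.
  set (v := w / - b). assert (Hw : w = - b * v) by (unfold v; field; lra).
  rewrite Hw in H1, H2. split; nra.
Qed.

Lemma Tneg_div w : in_open b w -> Tneg b (w / - b) = w.
Proof.
  intros [H1 H2]. rewrite (Tneg_eq b _ 0).
  - cbn. field. lra.
  - replace (- b * (w / - b)) with w by (field; lra). cbn. lra.
Qed.

Lemma div_pow_S z n : z / (- b) ^ S n = (z / (- b) ^ n) / - b.
Proof. cbn. field. split; [apply pow_opp_neq0 | lra]. Qed.

Lemma iter_Tneg_div j w : in_open b w -> Nat.iter j (Tneg b) (w / (- b) ^ j) = w.
Proof.
  revert w; induction j as [|j IH]; intros w Hw.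
  - cbn. field.
  - replace (w / (- b) ^ S j) with ((w / - b) / (- b) ^ j).
    + rewrite Nat.iter_succ, IH by now apply in_open_div. now apply Tneg_div.
    + cbn. field. split; [apply pow_opp_neq0 | lra].
Qed.

Lemma in_open_div_pow_le z k m : in_open b (z / (- b) ^ k) -> (k <= m)%nat ->
  in_open b (z / (- b) ^ m).
Proof.
  intros Hk Hm. induction Hm as [|m _ IH]; [exact Hk|].
  rewrite div_pow_S. now apply in_open_div.
Qed.

Lemma exists_in_open z : exists k, in_open b (z / (- b) ^ k).
Proof.
  pose proof ell_bounds.
  assert (eps_pos : 0 < (ell b + 1) / (Rabs z + 1)).
  { apply Rdiv_lt_0_compat; [lra|]. pose proof (Rabs_pos z); lra. }
  destruct (pow_lt_1_zero _ Rabs_inv_opp_lt1 _ eps_pos) as [N HN].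
  exists N. specialize (HN N (le_n _)).
  assert (Habs : Rabs (z / (- b) ^ N) < ell b + 1).
  { unfold Rdiv. rewrite <- pow_inv, Rabs_mult.
    pose proof (Rabs_pos z). pose proof (Rabs_pos ((/ - b) ^ N)).
    apply Rmult_lt_compat_r with (r := Rabs z + 1) in HN; [|lra].
    unfold Rdiv in HN. rewrite Rmult_assoc, Rinv_l in HN by lra. nra. }
  apply Rabs_def2 in Habs. unfold in_open. lra.
Qed.

Lemma min_index_exists z : exists k, min_index b z k.
Proof.
  destruct (exists_in_open z) as [k Hk].
  destruct (exists_least_nat (fun k => in_open b (z / (- b) ^ k)) k Hk) as [m Hm]. now exists m.
Qed.

Lemma pow_mul_bounded_eq0 c : (forall i, Rabs ((- b) ^ i * c) <= 1) -> c = 0.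
Proof.
  intros Hbd. destruct (Req_dec c 0) as [|Hc]; [assumption|exfalso].
  assert (Hc_pos : 0 < Rabs c) by now apply Rabs_pos_lt.
  destruct (pow_lt_1_zero _ Rabs_inv_opp_lt1 _ Hc_pos) as [N HN].
  specialize (HN N (le_n _)). specialize (Hbd N).
  assert (Hm : Rabs c = Rabs ((/ - b) ^ N) * Rabs ((- b) ^ N * c)).
  { rewrite <- Rabs_mult, pow_inv. f_equal. field. apply pow_opp_neq0. }
  pose proof (Rabs_pos ((/ - b) ^ N)). nra.
Qed.

(* By [vanishes_after_at] any normalising [K] will do; reaching [0] after [K + n] steps
   means that at most the first [n] fractional digits are nonzero. *)
Definition vanishes_after (z : R) (n : nat) : Prop :=
  exists K, in_open b (z / (- b) ^ K) /\ Nat.iter (K + n) (Tneg b) (z / (- b) ^ K) = 0.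

Lemma iter_Tneg_shift z K K' n : (K <= K')%nat -> in_open b (z / (- b) ^ K) ->
  Nat.iter (K' + n) (Tneg b) (z / (- b) ^ K') = Nat.iter (K + n) (Tneg b) (z / (- b) ^ K).
Proof.
  intros HK Ho.
  replace (K' + n)%nat with ((K + n) + (K' - K))%nat by lia.
  replace (z / (- b) ^ K') with ((z / (- b) ^ K) / (- b) ^ (K' - K)).
  - now rewrite Nat.iter_add, iter_Tneg_div.
  - replace K' with ((K' - K) + K)%nat at 2 by lia. rewrite pow_add. field.
    split; apply pow_opp_neq0.
Qed.

Lemma vanishes_after_at z n K : vanishes_after z n -> in_open b (z / (- b) ^ K) ->
  Nat.iter (K + n) (Tneg b) (z / (- b) ^ K) = 0.
Proof.
  intros [K0 [Ho0 H0]] Ho.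
  rewrite <- (iter_Tneg_shift z K (Nat.max K0 K) n) by (lia || assumption).
  rewrite (iter_Tneg_shift z K0 (Nat.max K0 K) n) by (lia || assumption). exact H0.
Qed.

Lemma vanishes_after0 : vanishes_after 0 0.
Proof.
  pose proof ell_bounds. exists 0%nat.
  rewrite Rdiv_0_l, iter_Tneg_0. split; [unfold in_open; lra | reflexivity].
Qed.

(* Zero digits from position [k] on give [T^(k+i) w = (-b)^i T^k w], which stays bounded
   only if [T^k w = 0]. *)
Lemma in_Zneg_vanishes_after x : in_Zneg b x -> vanishes_after x 0.
Proof.
  intros [k [[Ho _] Hdig]].
  set (w := x / (- b) ^ k) in *.
  assert (Hpow : forall i, Nat.iter (k + i) (Tneg b) w = (- b) ^ i * Nat.iter k (Tneg b) w).
  { induction i as [|i IH].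
    - rewrite Nat.add_0_r. cbn. ring.
    - specialize (Hdig (S i) ltac:(lia)).
      replace (k + S i - 1)%nat with (k + i)%nat in Hdig by lia.
      rewrite Nat.add_succ_r, Nat.iter_succ. unfold Tneg at 1.
      unfold digit in Hdig. rewrite Hdig, IH. cbn. ring. }
  exists k. rewrite Nat.add_0_r. split; [exact Ho|].
  apply pow_mul_bounded_eq0. intros i. rewrite <- Hpow.
  pose proof (iter_Tneg_range b w (k + i) Ho). pose proof ell_bounds.
  apply Rabs_le. lra.
Qed.

Lemma vanishes_after_scale z n : vanishes_after z n -> vanishes_after (z * (- b) ^ n) 0.
Proof.
  intros [K [Ho H]]. exists (K + n)%nat.
  replace (z * (- b) ^ n / (- b) ^ (K + n)) with (z / (- b) ^ K)
    by (rewrite pow_add; field; split; apply pow_opp_neq0).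
  now rewrite Nat.add_0_r.
Qed.

Lemma vanishes_after_frac_zero z n : vanishes_after z n -> frac_zero_after b z n.
Proof.
  intros Hz. pose proof ell_bounds.
  destruct (min_index_exists z) as [k [Ho Hmin]].
  exists k. split; [split; assumption|].
  intros j Hj. unfold digit.
  replace (k + j - 1)%nat with ((j - 1 - n) + (k + n))%nat by lia.
  rewrite Nat.iter_add, (vanishes_after_at z n k Hz Ho), iter_Tneg_0.
  apply Int_part_unique. cbn. lra.
Qed.

Lemma vanishes_after_fr_le z n : vanishes_after z n -> fr_le b z n.
Proof.
  intros Hz. split.
  - exists n. apply vanishes_after_frac_zero. now apply vanishes_after_scale.
  - now apply vanishes_after_frac_zero.
Qed.

End NegativeBetaTransformation.

(* [(a, b, c)] encodes [a + b γ + c γ^2]; multiplication by [γ] uses [γ^3 = γ^2 + γ + 1]. *)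
Definition zg := (Z * Z * Z)%type.

Open Scope Z_scope.

Definition zg_add (s t : zg) : zg :=
  let '(a, b, c) := s in let '(a', b', c') := t in (a + a', b + b', c + c').
Definition zg_opp (t : zg) : zg := let '(a, b, c) := t in (- a, - b, - c).
Definition zg_addZ (t : zg) (n : Z) : zg := let '(a, b, c) := t in (a + n, b, c).
Definition zg_mulNg (t : zg) : zg := let '(a, b, c) := t in (- c, - a - c, - b - c).
Definition zg_mulg1 (t : zg) : zg := let '(a, b, c) := t in (a + c, a + b + c, b + 2 * c).
Definition zg_eqb (s t : zg) : bool :=
  let '(a, b, c) := s in let '(a', b', c') := t in (a =? a') && (b =? b') && (c =? c').

(* A lower bound for [10^9 (a + b γ + c γ^2)], from
   [1839286755 <= 10^9 γ <= 1839286756] and [3382975767 <= 10^9 γ^2 <= 3382975771]. *)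
Definition zg_lower (t : zg) : Z :=
  let '(a, b, c) := t in
  1000000000 * a + (if 0 <=? b then b * 1839286755 else b * 1839286756)
    + (if 0 <=? c then c * 3382975767 else c * 3382975771).
Definition zg_posb (t : zg) : bool := 0 <? zg_lower t.
Definition zg_nonnegb (t : zg) : bool := zg_eqb t (0, 0, 0) || zg_posb t.

(* [(γ + 1)(t - ℓ) = (γ + 1) t + γ], so [t ∈ [ℓ, ℓ + 1)] iff it lies in [[0, γ + 1)]. *)
Definition zg_shift (t : zg) : zg := zg_add (zg_mulg1 t) (0, 1, 0).
Definition zg_in_domb (t : zg) : bool :=
  zg_nonnegb (zg_shift t) && zg_posb (zg_add (1, 1, 0) (zg_opp (zg_shift t))).
Definition zg_out_domb (t : zg) : bool :=
  zg_posb (zg_opp (zg_shift t)) || zg_nonnegb (zg_add (zg_shift t) (-1, -1, 0)).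

Definition zg_T (t : zg) : option zg :=
  option_map (fun d => zg_addZ (zg_mulNg t) (- d))
    (find (fun d => zg_in_domb (zg_addZ (zg_mulNg t) (- d))) [0; 1]).

Fixpoint zg_iterT (n : nat) (t : zg) : option zg :=
  match n with
  | O => Some t
  | S n' => match zg_T t with Some t' => zg_iterT n' t' | None => None end
  end.

Definition fin_check (L : list zg) : bool :=
  forallb (fun t => zg_out_domb t ||
    match zg_iterT 6 t with Some t' => zg_eqb t' (0, 0, 0) | None => false end) L.

Definition zg_out_windowb (p q t : zg) : bool :=
  zg_nonnegb (zg_opp (zg_add (zg_mulg1 t) p)) || zg_nonnegb (zg_add (zg_mulg1 t) (zg_opp q)).

(* [a], [a2], [c] range over the digits of [x], [y], [z] in one step of [T]. *)
Definition step_check (sg : Z) (p q : zg) (L : list zg) : bool :=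
  forallb (fun t => forallb (fun a => forallb (fun a2 => forallb (fun c =>
    let t' := zg_addZ (zg_mulNg t) (a + sg * a2 - c) in
    existsb (zg_eqb t') L || zg_out_windowb p q t') [0; 1]) [0; 1]) [0; 1]) L.

(* The closure of [[(0, 0, 0)]] under the transitions inspected by [step_check]. *)
Definition states_add : list zg :=
  [(-3,0,1); (-2,-3,2); (-2,-2,2); (-2,-1,1); (-2,0,1); (-2,1,0); (-1,-3,2); (-1,-2,1);
   (-1,-1,1); (-1,0,0); (-1,1,0); (-1,2,-1); (0,-3,2); (0,-2,1); (0,-1,1); (0,0,0);
   (0,2,-1); (1,-3,1); (1,-2,1); (1,-1,0); (1,0,0); (1,1,-1); (1,2,-1); (2,-3,1);
   (2,-1,0); (2,1,-1); (3,-2,0); (3,-1,0); (3,0,-1); (3,1,-1)].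
Definition states_sub : list zg :=
  [(-3,-1,1); (-3,0,1); (-3,1,0); (-3,2,0); (-2,-1,1); (-2,1,0); (-2,3,-1); (-1,-2,1);
   (-1,-1,1); (-1,0,0); (-1,1,0); (-1,2,-1); (-1,3,-1); (0,-2,1); (0,0,0); (0,1,-1);
   (0,2,-1); (0,3,-2); (1,-2,1); (1,-1,0); (1,0,0); (1,1,-1); (1,2,-1); (1,3,-2);
   (2,-1,0); (2,0,-1); (2,1,-1); (2,2,-2); (2,3,-2); (3,0,-1)].

Lemma step_check_add : step_check 1 (2, 1, 0) (1, 2, 0) states_add = true.
Proof. vm_compute. reflexivity. Qed.
Lemma step_check_sub : step_check (-1) (1, 2, 0) (2, 1, 0) states_sub = true.
Proof. vm_compute. reflexivity. Qed.
Lemma fin_check_add : fin_check states_add = true.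
Proof. vm_compute. reflexivity. Qed.
Lemma fin_check_sub : fin_check states_sub = true.
Proof. vm_compute. reflexivity. Qed.

Close Scope Z_scope.

Lemma zg_eqb_sound s t : zg_eqb s t = true -> s = t.
Proof.
  destruct s as [[a b] c], t as [[a' b'] c']. cbn.
  rewrite !andb_true_iff, !Z.eqb_eq. now intros [[-> ->] ->].
Qed.

Section Tribonacci.

Variable g : R.
Hypothesis g_gt1 : 1 < g.
Hypothesis g_root : g ^ 3 - g ^ 2 - g - 1 = 0.

Definition zg_val (t : zg) : R := let '(a, b, c) := t in IZR a + IZR b * g + IZR c * g ^ 2.

Lemma g_lt2 : g < 2.
Proof. nra. Qed.

Lemma g_enclosure : 1839286755 <= 1000000000 * g <= 1839286756 /\
  3382975767 <= 1000000000 * g ^ 2 <= 3382975771.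
Proof.
  assert (lo : 1839286755 / 1000000000 <= g).
  { destruct (Rle_lt_dec (1839286755 / 1000000000) g); [assumption|nra]. }
  assert (hi : g <= 1839286756 / 1000000000).
  { destruct (Rle_lt_dec g (1839286756 / 1000000000)); [assumption|nra]. }
  repeat split; nra.
Qed.

Lemma zg_val_add s t : zg_val (zg_add s t) = zg_val s + zg_val t.
Proof. destruct s as [[a b] c], t as [[a' b'] c']. cbn. rewrite !plus_IZR. ring. Qed.

Lemma zg_val_opp t : zg_val (zg_opp t) = - zg_val t.
Proof. destruct t as [[a b] c]. cbn. rewrite !opp_IZR. ring. Qed.

Lemma zg_val_addZ t n : zg_val (zg_addZ t n) = zg_val t + IZR n.
Proof. destruct t as [[a b] c]. cbn. rewrite plus_IZR. ring. Qed.

Lemma zg_val_mulNg t : zg_val (zg_mulNg t) = - g * zg_val t.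
Proof.
  destruct t as [[a b] c]. cbn [zg_val zg_mulNg]. rewrite !minus_IZR, !opp_IZR.
  transitivity (- g * (IZR a + IZR b * g + IZR c * g ^ 2) + IZR c * (g ^ 3 - g ^ 2 - g - 1));
    [ring | rewrite g_root; ring].
Qed.

Lemma zg_val_mulg1 t : zg_val (zg_mulg1 t) = (g + 1) * zg_val t.
Proof.
  destruct t as [[a b] c]. cbn [zg_val zg_mulg1]. rewrite !plus_IZR, !mult_IZR.
  transitivity ((g + 1) * (IZR a + IZR b * g + IZR c * g ^ 2) - IZR c * (g ^ 3 - g ^ 2 - g - 1));
    [ring | rewrite g_root; ring].
Qed.

Lemma zg_lower_le t : IZR (zg_lower t) <= 1000000000 * zg_val t.
Proof.
  destruct g_enclosure as [[A1 A2] [B1 B2]].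
  destruct t as [[a b] c]. unfold zg_lower, zg_val.
  destruct (Z.leb_spec 0 b) as [Hb|Hb]; destruct (Z.leb_spec 0 c) as [Hc|Hc];
    apply IZR_le in Hb || apply IZR_lt in Hb; apply IZR_le in Hc || apply IZR_lt in Hc;
    rewrite !plus_IZR, !mult_IZR; nra.
Qed.

Lemma zg_posb_sound t : zg_posb t = true -> 0 < zg_val t.
Proof.
  unfold zg_posb. rewrite Z.ltb_lt. intros H. apply IZR_lt in H.
  pose proof (zg_lower_le t). lra.
Qed.

Lemma zg_nonnegb_sound t : zg_nonnegb t = true -> 0 <= zg_val t.
Proof.
  unfold zg_nonnegb. rewrite orb_true_iff. intros [H|H].
  - apply zg_eqb_sound in H. subst. cbn. lra.
  - apply zg_posb_sound in H. lra.
Qed.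

Lemma zg_val_shift t : zg_val (zg_shift t) = (g + 1) * (zg_val t - ell g).
Proof.
  unfold zg_shift. rewrite zg_val_add, zg_val_mulg1. pose proof (ell_mul g g_gt1). cbn. nra.
Qed.

Lemma zg_in_domb_sound t : zg_in_domb t = true -> ell g <= zg_val t < ell g + 1.
Proof.
  unfold zg_in_domb. rewrite andb_true_iff. intros [H1 H2].
  apply zg_nonnegb_sound in H1. apply zg_posb_sound in H2.
  rewrite zg_val_add, zg_val_opp, zg_val_shift in *. cbn in H2. split; nra.
Qed.

Lemma zg_out_domb_sound t : zg_out_domb t = true -> ~ (ell g <= zg_val t < ell g + 1).
Proof.
  unfold zg_out_domb. rewrite orb_true_iff. intros [H|H] Hdom.
  - apply zg_posb_sound in H. rewrite zg_val_opp, zg_val_shift in H. nra.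
  - apply zg_nonnegb_sound in H. rewrite zg_val_add, zg_val_shift in H. cbn in H. nra.
Qed.

Lemma zg_T_sound t t' : zg_T t = Some t' -> Tneg g (zg_val t) = zg_val t'.
Proof.
  unfold zg_T. destruct (find _ _) as [d|] eqn:Hfind; [|discriminate].
  intros [= <-]. apply find_some in Hfind as [_ Hdom].
  apply zg_in_domb_sound in Hdom. rewrite zg_val_addZ, zg_val_mulNg, opp_IZR in *.
  apply Tneg_eq. lra.
Qed.

Lemma zg_iterT_sound n t t' : zg_iterT n t = Some t' ->
  Nat.iter n (Tneg g) (zg_val t) = zg_val t'.
Proof.
  revert t; induction n as [|n IH]; intros t H; cbn in H.
  - now injection H as <-.
  - destruct (zg_T t) as [t1|] eqn:Ht; [|discriminate].
    rewrite Nat.iter_succ_r, (zg_T_sound t t1 Ht). now apply IH.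
Qed.

Lemma fin_check_sound L t : fin_check L = true -> In t L ->
  ell g <= zg_val t < ell g + 1 -> Nat.iter 6 (Tneg g) (zg_val t) = 0.
Proof.
  unfold fin_check. rewrite forallb_forall. intros HL Hin Hdom.
  specialize (HL t Hin). apply orb_true_iff in HL as [H|H].
  - now apply zg_out_domb_sound in H.
  - destruct (zg_iterT 6 t) as [t'|] eqn:Ht; [|discriminate].
    apply zg_eqb_sound in H. subst. rewrite (zg_iterT_sound 6 t _ Ht). cbn. ring.
Qed.

Lemma zg_out_windowb_sound p q t : zg_out_windowb p q t = true ->
  ~ (- zg_val p < (g + 1) * zg_val t < zg_val q).
Proof.
  unfold zg_out_windowb. rewrite orb_true_iff.
  intros [H|H]; apply zg_nonnegb_sound in H;
    rewrite ?zg_val_opp, zg_val_add, ?zg_val_opp, zg_val_mulg1 in H; lra.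
Qed.

Lemma step_check_sound sg p q L t (a a2 c : Z) : step_check sg p q L = true -> In t L ->
  (a = 0 \/ a = 1)%Z -> (a2 = 0 \/ a2 = 1)%Z -> (c = 0 \/ c = 1)%Z ->
  - zg_val p < (g + 1) * zg_val (zg_addZ (zg_mulNg t) (a + sg * a2 - c)) < zg_val q ->
  In (zg_addZ (zg_mulNg t) (a + sg * a2 - c)) L.
Proof.
  intros HL Hin Ha Ha2 Hc Hwin.
  assert (H01 : forall d : Z, (d = 0 \/ d = 1)%Z -> In d [0; 1]%Z) by (cbn; lia).
  unfold step_check in HL. rewrite forallb_forall in HL. specialize (HL t Hin).
  rewrite forallb_forall in HL. specialize (HL a (H01 a Ha)).
  rewrite forallb_forall in HL. specialize (HL a2 (H01 a2 Ha2)).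
  rewrite forallb_forall in HL. specialize (HL c (H01 c Hc)).
  apply orb_true_iff in HL as [H|H].
  - apply existsb_exists in H as [s [Hs Heq]]. apply zg_eqb_sound in Heq. now subst.
  - now apply zg_out_windowb_sound in H.
Qed.

Definition window_covers (sg : Z) (p q : zg) : Prop :=
  forall s u v, ell g <= s < ell g + 1 -> ell g <= u < ell g + 1 -> ell g <= v < ell g + 1 ->
    - zg_val p < (g + 1) * (s - u - IZR sg * v) < zg_val q.

Lemma window_covers_add : window_covers 1 (2, 1, 0)%Z (1, 2, 0)%Z.
Proof. intros s u v Hs Hu Hv. pose proof (ell_mul g g_gt1). cbn. split; nra. Qed.

Lemma window_covers_sub : window_covers (-1) (1, 2, 0)%Z (2, 1, 0)%Z.
Proof. intros s u v Hs Hu Hv. pose proof (ell_mul g g_gt1). cbn. split; nra. Qed.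

Lemma orbit_combination_in_states sg p q L wx wy wz t0 :
  step_check sg p q L = true -> window_covers sg p q -> In t0 L ->
  in_open g wx -> in_open g wy -> in_open g wz -> wz - wx - IZR sg * wy = zg_val t0 ->
  forall j, exists t, In t L /\
    Nat.iter j (Tneg g) wz - Nat.iter j (Tneg g) wx - IZR sg * Nat.iter j (Tneg g) wy = zg_val t.
Proof.
  intros Hstep Hwin Ht0 Hx Hy Hz Hcomb j. induction j as [|j [t [Hin Ht]]].
  - now exists t0.
  - pose proof g_lt2 as g_lt2.
    destruct (Tneg_digit01 g g_gt1 _ g_lt2 (iter_Tneg_range g wz j Hz)) as [c [Hc Ec]].
    destruct (Tneg_digit01 g g_gt1 _ g_lt2 (iter_Tneg_range g wx j Hx)) as [a [Ha Ea]].
    destruct (Tneg_digit01 g g_gt1 _ g_lt2 (iter_Tneg_range g wy j Hy)) as [a2 [Ha2 Ea2]].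
    set (t' := zg_addZ (zg_mulNg t) (a + sg * a2 - c)).
    assert (Hnext : Nat.iter (S j) (Tneg g) wz - Nat.iter (S j) (Tneg g) wx
                    - IZR sg * Nat.iter (S j) (Tneg g) wy = zg_val t').
    { unfold t'. rewrite !Nat.iter_succ, Ec, Ea, Ea2, zg_val_addZ, zg_val_mulNg, <- Ht,
        minus_IZR, plus_IZR, mult_IZR. ring. }
    exists t'. split; [|exact Hnext].
    apply (step_check_sound sg p q L t a a2 c Hstep Hin Ha Ha2 Hc).
    fold t'. rewrite <- Hnext. apply Hwin; apply iter_Tneg_range; assumption.
Qed.

Lemma combination_vanishes_after sg p q L :
  step_check sg p q L = true -> fin_check L = true -> In (0, 0, 0)%Z L -> window_covers sg p q ->
  forall x y, vanishes_after g x 0 -> vanishes_after g y 0 -> vanishes_after g (x + IZR sg * y) 6.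
Proof.
  intros Hstep Hfin H0 Hwin x y Hvx Hvy.
  set (z := x + IZR sg * y).
  pose proof Hvx as [Kx [Hox _]]. pose proof Hvy as [Ky [Hoy _]].
  destruct (exists_in_open g g_gt1 z) as [Kz Hoz].
  set (K := Nat.max (Nat.max Kx Ky) Kz).
  assert (HoxK : in_open g (x / (- g) ^ K)) by (apply (in_open_div_pow_le g g_gt1 x Kx); auto; lia).
  assert (HoyK : in_open g (y / (- g) ^ K)) by (apply (in_open_div_pow_le g g_gt1 y Ky); auto; lia).
  assert (HozK : in_open g (z / (- g) ^ K)) by (apply (in_open_div_pow_le g g_gt1 z Kz); auto; lia).
  assert (Hcomb : z / (- g) ^ K - x / (- g) ^ K - IZR sg * (y / (- g) ^ K) = zg_val (0, 0, 0)%Z).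
  { unfold z. cbn. field. apply pow_opp_neq0, g_gt1. }
  destruct (orbit_combination_in_states sg p q L _ _ _ _ Hstep Hwin H0 HoxK HoyK HozK Hcomb K)
    as [t [Hin Ht]].
  assert (HxK : Nat.iter K (Tneg g) (x / (- g) ^ K) = 0).
  { pose proof (vanishes_after_at g g_gt1 x 0 K Hvx HoxK) as H. now rewrite Nat.add_0_r in H. }
  assert (HyK : Nat.iter K (Tneg g) (y / (- g) ^ K) = 0).
  { pose proof (vanishes_after_at g g_gt1 y 0 K Hvy HoyK) as H. now rewrite Nat.add_0_r in H. }
  assert (HzK : Nat.iter K (Tneg g) (z / (- g) ^ K) = zg_val t)
    by (rewrite HxK, HyK, Rmult_0_r in Ht; lra).
  exists K. split; [exact HozK|].
  rewrite Nat.add_comm, Nat.iter_add, HzK.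
  apply (fin_check_sound L t Hfin Hin). rewrite <- HzK. now apply iter_Tneg_range.
Qed.

End Tribonacci.

Theorem theorem1 (g : R) (Hg1 : 1 < g) (Hg : g ^ 3 - g ^ 2 - g - 1 = 0)
  (x y : R) (Hx : in_Zneg g x) (Hy : in_Zneg g y) :
  fr_le g (x + y) 6 /\ fr_le g (x - y) 6 /\ fr_le g (- x) 6.
Proof.
  apply in_Zneg_vanishes_after in Hx, Hy; try exact Hg1.
  pose proof (combination_vanishes_after g Hg1 Hg 1 _ _ _
    step_check_add fin_check_add ltac:(cbn; tauto) (window_covers_add g Hg1)) as Hadd.
  pose proof (combination_vanishes_after g Hg1 Hg (-1) _ _ _
    step_check_sub fin_check_sub ltac:(cbn; tauto) (window_covers_sub g Hg1)) as Hsub.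
  split; [|split]; apply vanishes_after_fr_le; try exact Hg1.
  - replace (x + y) with (x + IZR 1 * y) by ring. now apply Hadd.
  - replace (x - y) with (x + IZR (-1) * y) by ring. now apply Hsub.
  - replace (- x) with (0 + IZR (-1) * x) by ring. apply Hsub; [|exact Hx].
    now apply vanishes_after0.
Qed.
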